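(* For every $n\ge 1$, $\mathcal A^{2h}_{n+1}( * )\neq 0$.
   Context: $\mathcal A( * )$ denotes the rational vector space spanned by unitrivalent graphs with vertex orientations at trivalent vertices (univalent vertices are called hairs), modulo the AS and IHX relations; it is graded by degree $=\tfrac12(\text{number of vertices})$, and $\mathcal A_k( * )$ is the degree-$k$ part. $\mathcal A^{2h}_{k}( * )\subset\mathcal A_k( * )$ is the subspace spanned by connected graphs having exactly two hairs, both attached to a single edge of a trivalent graph. *)

From HB Require Import structures.
From mathcomp Require Import all_boot all_order all_algebra all_fingroup.
Set Implicit Arguments. Unset Strict Implicit. Unset Printing Implicit Defensive.
Import GRing.Theory.
Local Open Scope ring_scope.

(* Unitrivalent graphs with vertex orientations, as combinatorial maps on    *)
(* half-edges.  A raw graph is (m, s, i) with half-edges 'I_m:               *)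
(*  - s : permutation whose cycles are the vertices; a 3-cycle of s is a     *)
(*        trivalent vertex together with its cyclic orientation, a fixed     *)
(*        point of s is a univalent vertex (a hair);                        *)
(*  - i : fixed-point-free involution whose 2-cycles are the edges.          *)
(* Isomorphism of oriented graphs = simultaneous conjugation of (s, i).      *)

Definition Jraw := {m : nat & ({perm 'I_m} * {perm 'I_m})%type}.

Definition mkJ m (s i : {perm 'I_m}) : Jraw := existT _ m (s, i).

Definition validJ (G : Jraw) : bool :=
  let: existT m (s, i) := G in
  [forall x : 'I_m, (s (s (s x)) == x) && (i x != x) && (i (i x) == x)].

Definition samev m (s : {perm 'I_m}) (x y : 'I_m) : bool :=
  y \in [:: x; s x; s (s x)].

Definition nverts (G : Jraw) : nat :=
  let: existT m (s, i) := G in fcard (fun x : 'I_m => s x) 'I_m.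

Definition degreeJ (G : Jraw) : nat := (nverts G)./2.

Definition connectedJ (G : Jraw) : bool :=
  let: existT m (s, i) := G in
  [forall x : 'I_m, forall y : 'I_m,
     connect (fun a b : 'I_m => (b == s a) || (b == i a)) x y].

(* connected, exactly two hairs, both attached to a single edge of the
   trivalent graph obtained by removing the hairs: the two attaching vertices
   are distinct trivalent vertices joined by an edge *)
Definition two_hairs_on_edge (G : Jraw) : bool :=
  let: existT m (s, i) := G in
  [&& connectedJ G,
      #|[set x : 'I_m | s x == x]| == 2 &
      [exists h1 : 'I_m, exists h2 : 'I_m,
        [&& h1 != h2, s h1 == h1, s h2 == h2,
            s (i h1) != i h1, s (i h2) != i h2,
            ~~ samev s (i h1) (i h2) &
            [exists y : 'I_m, exists z : 'I_m,
               [&& samev s (i h1) y, samev s (i h2) z & i y == z]]]]].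

Definition fcomb := seq (rat * Jraw).

Definition coef (l : fcomb) (H : Jraw) : rat :=
  \sum_(p <- l) (if p.2 == H then p.1 else 0).

Inductive relJ : fcomb -> Prop :=
  | rel_iso m (s i pi : {perm 'I_m}) :
      validJ (mkJ s i) ->
      relJ [:: (1, mkJ s i); (-1, mkJ (s ^ pi)%g (i ^ pi)%g)]
  (* AS: reversing the cyclic order at one trivalent vertex changes sign *)
  | rel_AS m (s i : {perm 'I_m}) (x : 'I_m) :
      validJ (mkJ s i) -> s x != x ->
      relJ [:: (1, mkJ s i); (1, mkJ (s ^ tperm (s x) (s (s x)))%g i)]
  (* IHX, in Jacobi form [[a,b],c] + [[b,c],a] + [[c,a],b] = 0 at an edge
     p -- q joining two distinct trivalent vertices (cyclic orders
     (p,p1,p2) and (q,q1,q2)); the legs stay attached to p1, p2, q1, q2 *)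
  | rel_IHX m (s0 s1 s2 i : {perm 'I_m}) (p q : 'I_m) :
      validJ (mkJ s0 i) -> i p = q -> s0 p != p -> s0 q != q ->
      ~~ samev s0 p q ->
      let p1 := s0 p in let p2 := s0 p1 in
      let q1 := s0 q in let q2 := s0 q1 in
      [/\ s1 p = p2, s1 p2 = q1 & s1 q1 = p] -> [/\ s1 q = p1, s1 p1 = q2 & s1 q2 = q] ->
      [/\ s2 p = q1, s2 q1 = p1 & s2 p1 = p] -> [/\ s2 q = p2, s2 p2 = q2 & s2 q2 = q] ->
      (forall x, x \notin [:: p; p1; p2; q; q1; q2] -> s1 x = s0 x /\ s2 x = s0 x) ->
      relJ [:: (1, mkJ s0 i); (1, mkJ s1 i); (1, mkJ s2 i)].

(* v lies in the Q-span of the relations (i.e. v = 0 in A( * )) *)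
Definition in_rel_span (v : Jraw -> rat) : Prop :=
  exists rs : seq (rat * fcomb),
    (forall r, r \in rs -> relJ r.2) /\
    (forall H, v H = \sum_(r <- rs) r.1 * coef r.2 H).

(* A^{2h}_k( * ) <> 0 : some element of the span of the generators is
   nonzero in A( * ) *)
Definition A2h_nonzero (k : nat) : Prop :=
  exists l : fcomb,
    (forall p, p \in l ->
       [/\ validJ p.2, two_hairs_on_edge p.2 & degreeJ p.2 = k]) /\
    ~ in_rel_span (coef l).

(* The so(3) weight system: colour every half-edge by a basis vector 0, 1, 2 of
   so(3) = (R^3, x), with equal colours at the two ends of an edge and colour 0 on
   hairs, and weight each trivalent vertex by the structure constant eps of its
   cyclically ordered colours.  This weight is invariant under isomorphism,
   changes sign under AS (antisymmetry of eps) and vanishes on IHX (Jacobi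
   identity), so it factors through A( * ).  Our generator is a necklace of n
   beads (pairs of vertices joined by a double edge) in which one edge of one bead
   is cut and its two ends become the hairs.  The two vertices of a bead see the same
   two colours on the bead edges, so their eps have the same sign and every
   colouring has weight >= 0, while the colouring by (v + 1) mod 3 has weight 1.
   Hence the necklace has positive weight and is nonzero in A( * ). *)

From HB Require Import structures.
From mathcomp Require Import all_boot all_order all_algebra all_fingroup.
From mathcomp Require Import zify ring.
Set Implicit Arguments. Unset Strict Implicit. Unset Printing Implicit Defensive.
Import GRing.Theory Num.Theory Order.TTheory.

Ltac case_colors := repeat match goal with
  | |- forall _ : 'I_3, _ => case=> [[|[|[|//]]] ?] end.

Ltac solve_eq_mem := let y := fresh "y" in move=> y; rewrite !inE;
  repeat match goal with |- context [y == ?a] => case: (y == a) end.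

Ltac case_ifs := repeat (match goal with |- context[if ?b then _ else _] =>
  lazymatch b with context[if _ then _ else _] => fail | _ => case: (boolP b) => ? end end).

Local Open Scope ring_scope.

(** * The so(3) weight system *)

(* Levi-Civita symbol, the structure constants of so(3) in the basis 0, 1, 2. *)
Definition eps (a b c : 'I_3) : int :=
  if [&& a != b, b != c & a != c] then (if (a.+1 %% 3 == b)%N then 1 else -1) else 0.

Lemma eps_swap a b c : eps a c b = - eps a b c.
Proof. by move: a b c; case_colors. Qed.

Lemma eps_rot a b c : eps b c a = eps a b c.
Proof. by move: a b c; case_colors. Qed.

Lemma eps_cube a b c : eps a b c ^+ 3 = eps a b c.
Proof. by move: a b c; case_colors. Qed.

Lemma eps_jacobi a b u v :
  \sum_(g : 'I_3) (eps g a b * eps g u v + eps g b u * eps g a v + eps g u a * eps g b v) = 0.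
Proof. by move: a b u v; case_colors; rewrite !big_ord_recr big_ord0. Qed.

Lemma eps_bead_ge0 a a' b d :
  0 <= eps a b d * (eps b d a * (eps d a b * (eps a' b d * (eps b d a' * eps d a' b)))).
Proof. by move: a a' b d; case_colors. Qed.

Lemma eps_cyc a : (a < 3)%N ->
  eps (inord a) (inord ((a + 1) %% 3)) (inord ((a + 2) %% 3)) = 1.
Proof. by case: a => [|[|[|//]]] _; rewrite /eps -!val_eqE /= !inordK. Qed.

Section Weights.
Variable m : nat.
Implicit Types (s i : {perm 'I_m}) (c : {ffun 'I_m -> 'I_3}) (x y : 'I_m).

Definition edge_weight i c x : int := (c (i x) == c x)%:R.

(* Each half-edge carries the factor of its edge and of its vertex, so edges count
   twice and trivalent vertices three times; as edge factors are 0/1 and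
   [eps ^+ 3 = eps], this is the usual state sum. *)
Definition vertex_weight s c x : int :=
  if s x == x then (c x == 0)%:R else eps (c x) (c (s x)) (c (s (s x))).

Definition halfedge_weight s i c x := edge_weight i c x * vertex_weight s c x.

Definition coloring_weight s i c := \prod_x halfedge_weight s i c x.

Definition orbit3 s x := [:: x; s x; s (s x)].

Lemma validJP s i : validJ (mkJ s i) ->
  [/\ forall x, s (s (s x)) = x, forall x, i x != x & forall x, i (i x) = x].
Proof.
by move=> /forallP valid; split=> x; have /andP[/andP[/eqP ? ?] /eqP ?] := valid x.
Qed.

Lemma orbit3_uniq s x : s (s (s x)) = x -> s x != x -> uniq (orbit3 s x).
Proof.
move=> s3 sx; have ssx : s (s x) != x.
  by apply: contra sx => /eqP ssx; rewrite -[X in _ == X]s3 ssx.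
have sssx : s (s x) != s x by apply: contra sx => /eqP/perm_inj ->.
by rewrite /= !inE !negb_or !(eq_sym x) sx ssx eq_sym sssx.
Qed.

Lemma orbit3_closed s x : s (s (s x)) = x -> {in orbit3 s x, forall y, s y \in orbit3 s x}.
Proof. by move=> s3 y; rewrite !inE => /or3P[] /eqP->; rewrite ?s3 eqxx ?orbT. Qed.

Lemma compl_closed s (A : seq 'I_m) y : (forall x, s (s (s x)) = x) ->
  {in A, forall x, s x \in A} -> y \notin A -> s y \notin A.
Proof. by move=> s3 clA; apply: contra => sy; rewrite -(s3 y); do 2 apply: (clA). Qed.

Lemma vertex_weight_cycle s c x y z : uniq [:: x; y; z] ->
  s x = y -> s y = z -> s z = x ->
  \prod_(w <- [:: x; y; z]) vertex_weight s c w = eps (c x) (c y) (c z).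
Proof.
rewrite /= !inE !negb_or => /and3P[/andP[xy xz] yz _] sx sy sz.
rewrite !big_cons big_nil mulr1 /vertex_weight sx sy sz sx.
rewrite eq_sym (negbTE xy) eq_sym (negbTE yz) (negbTE xz).
by rewrite (eps_rot (c y)) !(eps_rot (c x)) -expr2 -exprS eps_cube.
Qed.

Lemma vertex_weight_out s s' (A : seq 'I_m) c c' y :
  (forall x, x \notin A -> [/\ s x \notin A, s' x = s x & c' x = c x]) ->
  y \notin A -> vertex_weight s' c' y = vertex_weight s c y.
Proof.
move=> out yA; have [syA s'y c'y] := out y yA; have [ssyA s'sy c'sy] := out _ syA.
have [_ _ c'ssy] := out _ ssyA.
by rewrite /vertex_weight s'y s'sy c'y c'sy c'ssy.
Qed.

Lemma coloring_weight_split s s' i (A A' : seq 'I_m) c c' :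
  uniq A -> uniq A' -> A' =i A ->
  (forall y, y \notin A -> halfedge_weight s' i c' y = halfedge_weight s i c y) ->
  coloring_weight s' i c' =
    \prod_(y <- A) edge_weight i c' y * \prod_(y <- A') vertex_weight s' c' y *
    \prod_(y | y \notin A) halfedge_weight s i c y.
Proof.
move=> uA uA' eqA out; rewrite /coloring_weight (bigID (mem A)) /= -big_uniq //.
rewrite big_split /=; congr (_ * _ * _); last exact: eq_bigr.
by apply/perm_big/uniq_perm => // y; rewrite eqA.
Qed.

Lemma coloring_weight_conj s i pi c :
  coloring_weight (s ^ pi)%g (i ^ pi)%g c = coloring_weight s i [ffun y => c (pi y)].
Proof.
rewrite /coloring_weight (reindex_inj (@perm_inj _ pi)); apply: eq_bigr => x _.
rewrite /halfedge_weight /edge_weight /vertex_weight !ffunE !permJ (inj_eq (@perm_inj _ pi)).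
by case: ifP; rewrite ?permJ.
Qed.

Lemma orbit3_disjoint s x y : (forall z, s (s (s z)) = z) ->
  ~~ samev s x y -> ~~ has (mem (orbit3 s x)) (orbit3 s y).
Proof.
move=> s3 nxy; apply/hasPn => z zy; apply: contra nxy => zx.
have cl := orbit3_closed (s3 x).
move: zy; rewrite !inE => /or3P[] /eqP zE; rewrite zE in zx.
- exact: zx.
- by rewrite /samev -(s3 y); do 2 apply: (cl).
- by rewrite /samev -(s3 y); apply: (cl).
Qed.

Lemma halfedge_weight_hair_ge0 s i c x :
  s x = x -> 0 <= halfedge_weight s i c x.
Proof. by move=> sx; rewrite /halfedge_weight /vertex_weight sx eqxx mulr_ge0 ?ler0n. Qed.

Lemma halfedge_weight_neq0 s i c x : halfedge_weight s i c x != 0 ->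
  c (i x) = c x /\ (s x = x -> c x = 0).
Proof.
rewrite /halfedge_weight /edge_weight /vertex_weight mulf_eq0 negb_or => /andP[ex vx].
split; first by move: ex; case: (c (i x) =P c x) => // _; rewrite mulr0n eqxx.
by move=> sx; move: vx; rewrite sx eqxx; case: (c x =P 0) => // _; rewrite mulr0n eqxx.
Qed.

End Weights.

Definition so3_weight (G : Jraw) : int :=
  let: existT m (s, i) := G in \sum_c coloring_weight s i c.

(** * Invariance under the relations *)

Lemma so3_weight_conj m (s i pi : {perm 'I_m}) :
  so3_weight (mkJ (s ^ pi)%g (i ^ pi)%g) = so3_weight (mkJ s i).
Proof.
rewrite /= [RHS](reindex_inj (h := fun c : {ffun 'I_m -> 'I_3} => [ffun y => c (pi y)])).
  by apply: eq_bigr => c _; rewrite coloring_weight_conj.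
move=> c1 c2 /ffunP eq12; apply/ffunP => y.
by have := eq12 (pi^-1 y)%g; rewrite !ffunE permKV.
Qed.

Lemma so3_weight_AS m (s i : {perm 'I_m}) (x : 'I_m) :
  validJ (mkJ s i) -> s x != x ->
  so3_weight (mkJ s i) + so3_weight (mkJ (s ^ tperm (s x) (s (s x)))%g i) = 0.
Proof.
move=> /validJP[s3 _ _] sx; set t := tperm _ _; set s' := (s ^ t)%g.
have uA := orbit3_uniq (s3 x) sx; set A := orbit3 s x in uA.
have [x_sx x_ssx sx_ssx] : [/\ x != s x, x != s (s x) & s x != s (s x)].
  by move: uA; rewrite /= !inE !negb_or => /and3P[/andP[-> ->] -> _].
have s'E y : s' (t y) = t (s y) by rewrite permJ.
have tx : t x = x by rewrite tpermD 1?eq_sym.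
have t_sx : t (s x) = s (s x) by rewrite tpermL.
have t_ssx : t (s (s x)) = s x by rewrite tpermR.
have s'x : s' x = s (s x) by rewrite -{1}tx s'E t_sx.
have s'sx : s' (s x) = x by rewrite -{1}t_ssx s'E s3 tx.
have s'ssx : s' (s (s x)) = s x by rewrite -{1}t_sx s'E t_ssx.
have clA := compl_closed s3 (orbit3_closed (s3 x)).
have t_out y : y \notin A -> t y = y.
  by rewrite !inE !negb_or => /and3P[_ ? ?]; rewrite tpermD // eq_sym.
have s'_out y : y \notin A -> s' y = s y.
  by move=> yA; rewrite -{1}(t_out y yA) s'E t_out ?clA.
suff opp c : coloring_weight s' i c = - coloring_weight s i c.
  by rewrite /= -big_split big1 // => c _; rewrite opp; exact: addrN.
have out y : y \notin A -> [/\ s y \notin A, s' y = s y & c y = c y].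
  by move=> yA; rewrite clA ?s'_out.
have uA' : uniq [:: x; s (s x); s x].
  by rewrite /= !inE !negb_or x_sx x_ssx (eq_sym (s (s x))) sx_ssx.
rewrite (coloring_weight_split (A := A) (A' := [:: x; s (s x); s x]) (s := s) (c := c)) //.
- rewrite [in RHS](coloring_weight_split (A := A) (A' := A) (s := s) (c := c)) //.
  rewrite !vertex_weight_cycle ?s3 //.
  by rewrite eps_swap; ring.
- by solve_eq_mem.
- by move=> y yA; rewrite /halfedge_weight (vertex_weight_out out).
Qed.

Section Shift.
Variables (m : nat) (p q : 'I_m).
Implicit Types (c : {ffun 'I_m -> 'I_3}) (e : 'I_3).

Definition shift_at e c : {ffun 'I_m -> 'I_3} :=
  [ffun y => if y \in [:: p; q] then c y + e else c y].

Lemma shift_at_inj e : injective (shift_at e).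
Proof.
move=> c1 c2 /ffunP eq12; apply/ffunP => y.
by have := eq12 y; rewrite !ffunE; case: ifP => // _ /addIr.
Qed.

Lemma shift_at_out e c y : y \notin [:: p; q] -> shift_at e c y = c y.
Proof. by rewrite ffunE => /negbTE->. Qed.

Lemma shift_at_p e c : shift_at e c p = c p + e.
Proof. by rewrite ffunE mem_head. Qed.

Lemma shift_at_q e c : shift_at e c q = c q + e.
Proof. by rewrite ffunE !inE eqxx orbT. Qed.

Lemma edge_weight_shift (i : {perm 'I_m}) e c y : i p = q -> i q = p ->
  edge_weight i (shift_at e c) y = edge_weight i c y.
Proof.
move=> ipq iqp; have iE : (i y \in [:: p; q]) = (y \in [:: p; q]).
  by rewrite !inE -{1}ipq -{1}iqp !(inj_eq (@perm_inj _ i)) orbC.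
by rewrite /edge_weight !ffunE iE; case: ifP; rewrite // (inj_eq (addIr e)).
Qed.

(* Averaging over the translations of the colours at p and q lets us sum over the
   common colour of the two ends of the edge [p -- q]. *)
Lemma sum_shift_at (F : {ffun 'I_m -> 'I_3} -> int) :
  (\sum_c F c) *+ 3 = \sum_c \sum_e F (shift_at e c).
Proof.
have -> : (\sum_c F c) *+ 3 = \sum_(e : 'I_3) \sum_c F c by rewrite sumr_const card_ord.
rewrite [RHS]exchange_big /=; apply: eq_bigr => e _.
by rewrite (reindex_inj (@shift_at_inj e)).
Qed.

Lemma coloring_weight_shift (s0 s i : {perm 'I_m}) (A O : seq 'I_m) e c :
  (forall x, s0 (s0 (s0 x)) = x) -> {in A, forall y, s0 y \in A} -> p \in A -> q \in A ->
  i p = q -> i q = p -> uniq A -> uniq O -> O =i A ->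
  (forall y, y \notin A -> s y = s0 y) ->
  coloring_weight s i (shift_at e c) =
    \prod_(y <- A) edge_weight i c y * \prod_(y <- O) vertex_weight s (shift_at e c) y *
    \prod_(y | y \notin A) halfedge_weight s0 i c y.
Proof.
move=> s3 clA pA qA ipq iqp uA uO eqO s_out.
rewrite (coloring_weight_split (s := s0) (c := c) uA uO eqO) => [|y yA].
  by congr (_ * _ * _); apply: eq_bigr => y _; rewrite edge_weight_shift.
rewrite /halfedge_weight edge_weight_shift //; congr (_ * _).
apply: (vertex_weight_out (A := A)) => // x xA; split; rewrite ?s_out //.
  exact: compl_closed.
by apply: shift_at_out; apply: contra xA; rewrite !inE => /orP[] /eqP->.
Qed.

End Shift.

Lemma so3_weight_IHX m (s0 s1 s2 i : {perm 'I_m}) (p q : 'I_m) :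
  validJ (mkJ s0 i) -> i p = q -> s0 p != p -> s0 q != q -> ~~ samev s0 p q ->
  let p1 := s0 p in let p2 := s0 p1 in let q1 := s0 q in let q2 := s0 q1 in
  [/\ s1 p = p2, s1 p2 = q1 & s1 q1 = p] -> [/\ s1 q = p1, s1 p1 = q2 & s1 q2 = q] ->
  [/\ s2 p = q1, s2 q1 = p1 & s2 p1 = p] -> [/\ s2 q = p2, s2 p2 = q2 & s2 q2 = q] ->
  (forall x, x \notin [:: p; p1; p2; q; q1; q2] -> s1 x = s0 x /\ s2 x = s0 x) ->
  so3_weight (mkJ s0 i) + so3_weight (mkJ s1 i) + so3_weight (mkJ s2 i) = 0.
Proof.
move=> /validJP[s3 _ i2] ipq sp sq npq p1 p2 q1 q2.
move=> [s1p s1p2 s1q1] [s1q s1p1 s1q2] [s2p s2q1 s2p1] [s2q s2p2 s2q2] s12_out.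
have iqp : i q = p by rewrite -ipq i2.
set A := orbit3 s0 p ++ orbit3 s0 q.
have uA : uniq A by rewrite cat_uniq !orbit3_uniq ?orbit3_disjoint.
have clA : {in A, forall y, s0 y \in A}.
  by move=> y; rewrite !mem_cat => /orP[] /(orbit3_closed (s3 _)) ->; rewrite ?orbT.
have uniq_mem (O : seq 'I_m) : O =i A -> (size O <= size A)%N -> uniq O.
  by move=> eqO; apply: (leq_size_uniq uA) => y; rewrite eqO.
have : uniq ([:: p; q] ++ [:: p1; p2; q1; q2]) by apply: uniq_mem => //; solve_eq_mem.
rewrite cat_uniq => /and3P[_ /hasPn pq_out _].
have [p1_out p2_out q1_out q2_out] :
    [/\ p1 \notin [:: p; q], p2 \notin [:: p; q], q1 \notin [:: p; q] & q2 \notin [:: p; q]].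
  by split; apply: pq_out; rewrite !inE eqxx ?orbT.
set O1 := [:: p; p2; q1] ++ [:: q; p1; q2].
set O2 := [:: p; q1; p1] ++ [:: q; p2; q2].
have [eqO1 eqO2] : O1 =i A /\ O2 =i A by split; solve_eq_mem.
have [uO1 uO2] := (uniq_mem _ eqO1 isT, uniq_mem _ eqO2 isT).
have local s O e c := @coloring_weight_shift m p q s0 s i A O e c s3 clA.
move: (uA) (uO1) (uO2); rewrite !cat_uniq => /and3P[? _ ?] /and3P[? _ ?] /and3P[? _ ?].
rewrite /= -!big_split /=; apply/eqP.
rewrite -(orFb (_ == 0)) -[false]/(3 == 0)%N -mulrn_eq0 (sum_shift_at p q).
apply/eqP/big1 => c _.
set E := \prod_(y <- A) edge_weight i c y.
set R := \prod_(y | y \notin A) halfedge_weight s0 i c y.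
transitivity (E * R * \sum_e
    (eps (c p + e) (c p1) (c p2) * eps (c q + e) (c q1) (c q2) +
     eps (c p + e) (c p2) (c q1) * eps (c q + e) (c p1) (c q2) +
     eps (c p + e) (c q1) (c p1) * eps (c q + e) (c p2) (c q2))).
  rewrite big_distrr; apply: eq_bigr => e _ /=.
  rewrite (local s0 A) ?(local s1 O1) ?(local s2 O2) ?mem_cat ?mem_head ?orbT //;
    try by move=> y /s12_out[].
  rewrite -/E -/R !big_cat !vertex_weight_cycle ?s3 //= -/p1 -/q1 -/p2 -/q2.
  rewrite !shift_at_p !shift_at_q !shift_at_out //.
  ring.
case: (eqVneq (c q) (c p)) => [cqp|ncqp]; last first.
  by rewrite /E big_cons /edge_weight ipq (negbTE ncqp) !mul0r.
have := eps_jacobi (c p1) (c p2) (c q1) (c q2).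
by rewrite (reindex_inj (addrI (c p))) cqp => ->; rewrite mulr0.
Qed.

Definition so3_weight_comb (l : fcomb) : rat := \sum_(p <- l) p.1 * (so3_weight p.2)%:~R.

Lemma so3_weight_comb_rel r : relJ r -> so3_weight_comb r = 0.
Proof.
rewrite /so3_weight_comb; case=> [m s i pi _ | m s i x valid sx | m s0 s1 s2 i p q *].
- by rewrite !big_cons big_nil so3_weight_conj /= mul1r mulN1r addr0 addrN.
- by rewrite !big_cons big_nil !mul1r addr0 -intrD so3_weight_AS.
- by rewrite !big_cons big_nil !mul1r addr0 addrA -!intrD (@so3_weight_IHX _ s0 s1 s2 i p q).
Qed.

Lemma so3_weight_comb_coef (l : fcomb) (U : seq Jraw) : uniq U ->
  {subset [seq p.2 | p <- l] <= U} ->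
  so3_weight_comb l = \sum_(H <- U) coef l H * (so3_weight H)%:~R.
Proof.
move=> uU sub; rewrite /so3_weight_comb /coef.
under [RHS]eq_bigr => H _ do rewrite big_distrl /=.
rewrite exchange_big /=; apply: eq_big_seq => p pin.
rewrite (bigD1_seq p.2) ?sub ?map_f //= eqxx big1 ?addr0 // => H /negbTE.
by rewrite eq_sym => ->; rewrite mul0r.
Qed.

Lemma so3_weight_comb_rel_span (l : fcomb) :
  in_rel_span (coef l) -> so3_weight_comb l = 0.
Proof.
move=> [rs [rel_rs coef_rs]].
set U := undup ([seq p.2 | p <- l] ++ flatten [seq [seq p.2 | p <- r.2] | r <- rs]).
have uU : uniq U by apply: undup_uniq.
rewrite (so3_weight_comb_coef uU) => [|H Hl]; last by rewrite mem_undup mem_cat Hl.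
under eq_bigr => H _ do rewrite coef_rs big_distrl /=.
rewrite exchange_big /=; apply: big1_seq => r /andP[_ rin].
transitivity (r.1 * so3_weight_comb r.2).
  2: by rewrite so3_weight_comb_rel ?mulr0 //; apply: rel_rs.
rewrite (so3_weight_comb_coef uU) => [|H Hr]; last first.
  rewrite mem_undup mem_cat; apply/orP; right; apply/flattenP.
  by exists [seq p.2 | p <- r.2]; rewrite ?(map_f _ rin).
by rewrite big_distrr; apply: eq_bigr => H _; rewrite /= mulrA.
Qed.

Local Close Scope ring_scope.

Lemma connectedJ_from m (s i : {perm 'I_m}) x0 : validJ (mkJ s i) ->
  (forall y, connect (fun a b => (b == s a) || (b == i a)) x0 y) ->
  connectedJ (mkJ s i).
Proof.
move=> /validJP[s3 _ i2] reach; apply/forallP => x; apply/forallP => y.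
apply: (connect_trans _ (reach y)); have /connectP[pth + ->] := reach x.
elim: pth x0 {reach} => [|z pth IH] x0 /=; first by rewrite connect0.
move=> /andP[x0z /IH reach_z]; apply: (connect_trans reach_z).
case/orP: x0z => /eqP ->; last by apply: connect1; rewrite i2 eqxx orbT.
rewrite -{2}(s3 x0); apply: (connect_trans (y := s (s x0))); by apply: connect1; rewrite eqxx.
Qed.

Lemma nverts_mkJ m (s i : {perm 'I_m}) : (forall x, s (s (s x)) = x) ->
  nverts (mkJ s i) * 3 = #|[pred x | s x == x]| * 3 + #|[pred x | s x != x]|.
Proof.
move=> s3; have injs : injective s by apply: perm_inj.
set a := [pred x | s x == x].
have cla : fclosed s a.
  move=> x y /eqP <-; rewrite !inE; apply/idP/idP => /eqP E; first by rewrite !E.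
  by rewrite (perm_inj E) eqxx.
rewrite /nverts /= (n_compC a) mulnDl; congr (_ + _).
  congr (_ * 3); rewrite -[RHS](fcard_order_set injs (n := 1)) ?muln1 //.
  apply/subsetP => x; rewrite !inE => /eqP sx.
  by apply/eqP; rewrite (@order_cycle _ s [:: x]) //= ?inE ?sx eqxx.
have -> : #|[pred x | s x != x]| = #|[predC a]| by apply: eq_card => x; rewrite !inE.
rewrite (fcard_order_set injs (n := 3)) //; last first.
  by move=> x y xy; have := cla x y xy; rewrite !inE => ->.
apply/subsetP => x; rewrite !inE => sx.
by apply/eqP; rewrite (@order_cycle _ s (orbit3 s x)) ?orbit3_uniq //= ?s3 ?inE ?eqxx.
Qed.

(** * The necklace *)

(* Half-edges [3v], [3v+1], [3v+2] (for [v < 2K]) form the trivalent vertex [v];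
   [6K] and [6K+1] are the hairs.  Bead [j] consists of the vertices [2j] and
   [2j+1], joined by the double edge [6j+1 -- 6j+4], [6j+2 -- 6j+5]; the edges
   [6j+3 -- 6j+6] (indices mod [6K]) close the beads into a necklace.  In bead [0]
   the edge [2 -- 5] is cut and its ends carry the hairs, so that the hairs sit on
   the two ends of the edge [1 -- 4]. *)
Definition neck_s (K x : nat) : nat :=
  if x < 6 * K then (if x %% 3 == 2 then x - 2 else x + 1) else x.

Definition neck_i (K x : nat) : nat :=
  if x < 6 * K then
    (if x %% 6 == 0 then (if x == 0 then 6 * K - 3 else x - 3)
     else if x %% 6 == 3 then (if x + 3 == 6 * K then 0 else x + 3)
     else if x %% 6 == 1 then x + 3
     else if x %% 6 == 4 then x - 3
     else if x %% 6 == 2 then (if x == 2 then 6 * K else x + 3)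
     else (if x == 5 then 6 * K + 1 else x - 3))
  else if x == 6 * K then 2 else 5.


Section NeckNat.
Variables (K x : nat).
Hypotheses (K_gt0 : 0 < K) (x_lt : x < (6 * K).+2).

Lemma neck_s_lt : neck_s K x < (6 * K).+2.
Proof. rewrite /neck_s; case_ifs; lia. Qed.

Lemma neck_i_lt : neck_i K x < (6 * K).+2.
Proof. rewrite /neck_i; case_ifs; lia. Qed.

Lemma neck_s3 : neck_s K (neck_s K (neck_s K x)) = x.
Proof. rewrite /neck_s; case_ifs; lia. Qed.

Lemma neck_iK : neck_i K (neck_i K x) = x.
Proof. rewrite {2}/neck_i; case_ifs; rewrite /neck_i; case_ifs; lia. Qed.

Lemma neck_i_neq : neck_i K x != x.
Proof. rewrite /neck_i; case_ifs; lia. Qed.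

End NeckNat.

Definition neck_size N := (6 * N.+1).+2.

Section Necklace.
Variable N : nat.
Local Notation K := N.+1.
Local Notation M := (neck_size N).

Definition neck_s_fun (x : 'I_M) : 'I_M := Ordinal (neck_s_lt (ltn0Sn N) (ltn_ord x)).
Definition neck_i_fun (x : 'I_M) : 'I_M := Ordinal (neck_i_lt (ltn0Sn N) (ltn_ord x)).

Lemma neck_s_fun_inj : injective neck_s_fun.
Proof.
move=> x y /(congr1 (neck_s K \o neck_s K \o val)) /=.
by rewrite !neck_s3 // => /val_inj.
Qed.

Lemma neck_i_fun_inj : injective neck_i_fun.
Proof.
move=> x y /(congr1 (neck_i K \o val)) /=.
by rewrite !neck_iK // => /val_inj.
Qed.

Definition necklace_s : {perm 'I_M} := perm neck_s_fun_inj.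
Definition necklace_i : {perm 'I_M} := perm neck_i_fun_inj.
Definition necklace : Jraw := mkJ necklace_s necklace_i.

Lemma necklace_sE x : val (necklace_s x) = neck_s K x.
Proof. by rewrite permE. Qed.

Lemma necklace_iE x : val (necklace_i x) = neck_i K x.
Proof. by rewrite permE. Qed.

Lemma necklace_s_inord k : k < M -> necklace_s (inord k) = inord (neck_s K k).
Proof. by move=> k_lt; apply: val_inj; rewrite necklace_sE /= !inordK ?neck_s_lt. Qed.

Lemma necklace_i_inord k : k < M -> necklace_i (inord k) = inord (neck_i K k).
Proof. by move=> k_lt; apply: val_inj; rewrite necklace_iE /= !inordK ?neck_i_lt. Qed.

Lemma necklace_valid : validJ necklace.
Proof.
apply/forallP => x; rewrite -!val_eqE /= !necklace_sE !necklace_iE.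
by rewrite neck_s3 ?neck_iK ?neck_i_neq ?eqxx.
Qed.

Lemma necklace_hair x : (necklace_s x == x) = (6 * K <= x).
Proof.
rewrite -val_eqE necklace_sE; case: x => v /= v_lt.
by rewrite /neck_s; case_ifs; apply/idP/idP; lia.
Qed.

End Necklace.

Section NecklaceGraph.
Variable N : nat.
Local Notation K := N.+1.
Local Notation M := (neck_size N).
Local Notation s := (necklace_s N).
Local Notation i := (necklace_i N).

Let reach k := connect (fun a b : 'I_M => (b == s a) || (b == i a)) (inord 0) (inord k).

Lemma reach_step a b : reach a -> a < M -> b < M ->
  (b == neck_s K a) || (b == neck_i K a) -> reach b.
Proof.
move=> reach_a a_lt b_lt ab; apply: connect_trans reach_a (connect1 _).
rewrite necklace_s_inord // necklace_i_inord //.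
by case/orP: ab => /eqP->; rewrite eqxx ?orbT.
Qed.

Ltac step h := apply: (reach_step h); rewrite /neck_size /neck_s /neck_i; case_ifs; lia.

Lemma reach_bead j : j < K -> forall t, t < 6 -> reach (6 * j + t).
Proof.
have bead j' : j' < K -> reach (6 * j') -> forall t, t < 6 -> reach (6 * j' + t).
  move=> j'_lt r0.
  have r1 : reach (6 * j' + 1) by step r0.
  have r4 : reach (6 * j' + 4) by step r1.
  have r5 : reach (6 * j' + 5) by step r4.
  have r3 : reach (6 * j' + 3) by step r5.
  have r2 : reach (6 * j' + 2) by step r1.
  by case=> [|[|[|[|[|[|//]]]]]] _; rewrite ?addn0.
elim: j => [|j IH] j_lt; first by apply: bead => //; apply: connect0.
by apply: bead => //; have r3 := IH (ltnW j_lt) 3 isT; step r3.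
Qed.

Lemma reach_all k : k < M -> reach k.
Proof.
move=> k_lt; case: (ltnP k (6 * K)) => k_bead.
  have -> : k = 6 * (k %/ 6) + k %% 6 by lia.
  by apply: reach_bead; lia.
have r2 := reach_bead (ltn0Sn N) (isT : 2 < 6).
have r5 := reach_bead (ltn0Sn N) (isT : 5 < 6).
have [->|->] : k = 6 * K \/ k = 6 * K + 1 by move: k_lt; rewrite /neck_size; lia.
  by step r2.
by step r5.
Qed.

Lemma necklace_connected : connectedJ (necklace N).
Proof.
apply: (connectedJ_from (x0 := inord 0)) (necklace_valid N) _ => y.
by have := reach_all (ltn_ord y); rewrite /reach inord_val.
Qed.

Lemma inord_eq a b : a < M -> b < M -> (inord a == inord b :> 'I_M) = (a == b).
Proof. by move=> a_lt b_lt; rewrite -val_eqE /= !inordK. Qed.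

Lemma card_necklace_hairs : #|[pred x : 'I_M | s x == x]| = 2.
Proof.
rewrite (eq_card (B := mem ([:: inord (6 * K); inord (6 * K).+1] : seq 'I_M))).
  by rewrite (card_uniqP _) //= inE inord_eq /neck_size //; lia.
move=> x; rewrite !inE necklace_hair -!val_eqE /= !inordK /neck_size //.
by case: x => v; rewrite /neck_size /= => v_lt; apply/idP/orP; lia.
Qed.

Lemma card_necklace_trivalent : #|[pred x : 'I_M | s x != x]| = 6 * K.
Proof.
have := cardC [pred x : 'I_M | s x == x]; rewrite card_necklace_hairs card_ord.
rewrite (eq_card (A := [predC _]) (B := [pred x : 'I_M | s x != x])) => [|x].
  by rewrite /neck_size; lia.
by rewrite !inE.
Qed.

Lemma necklace_degree : degreeJ (necklace N) = N.+2.
Proof.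
have [s3 _ _] := validJP (necklace_valid N).
have := nverts_mkJ i s3; rewrite card_necklace_hairs card_necklace_trivalent => nv.
rewrite /degreeJ (_ : nverts (necklace N) = 2 * N.+2) ?mul2n ?doubleK //.
by rewrite /necklace; lia.
Qed.

Ltac neck_eval := first [rewrite necklace_s_inord | rewrite necklace_i_inord];
  [congr inord; rewrite /neck_s /neck_i; case_ifs; lia | rewrite /neck_size; lia].

Lemma necklace_two_hairs_on_edge : two_hairs_on_edge (necklace N).
Proof.
apply/and3P; split; first exact: necklace_connected.
  by rewrite cardsE card_necklace_hairs.
have s6 : s (inord (6 * K)) = inord (6 * K) by neck_eval.
have s7 : s (inord (6 * K).+1) = inord (6 * K).+1 by neck_eval.
have i6 : i (inord (6 * K)) = inord 2 by neck_eval.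
have i7 : i (inord (6 * K).+1) = inord 5 by neck_eval.
have s2 : s (inord 2) = inord 0 by neck_eval.
have s0 : s (inord 0) = inord 1 by neck_eval.
have s5 : s (inord 5) = inord 3 by neck_eval.
have s3 : s (inord 3) = inord 4 by neck_eval.
have i1 : i (inord 1) = inord 4 by neck_eval.
apply/existsP; exists (inord (6 * K)); apply/existsP; exists (inord (6 * K).+1).
rewrite /samev !inE s6 s7 i6 i7 s2 s0 s5 s3 !eqxx !inord_eq /neck_size //=; try lia.
apply/andP; split; first by rewrite neq_ltn ltnSn.
apply/existsP; exists (inord 1); apply/existsP; exists (inord 4).
by rewrite !inE i1 !eqxx !orbT.
Qed.

End NecklaceGraph.

Definition neck_color (K v : nat) : nat := if v < 6 * K then (v + 1) %% 3 else 0.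

Local Open Scope ring_scope.

Section NecklaceWeight.
Variable N : nat.
Local Notation K := N.+1.
Local Notation M := (neck_size N).
Local Notation s := (necklace_s N).
Local Notation i := (necklace_i N).

Lemma neck_s_bead j t : (j < K)%N -> (t < 6)%N ->
  neck_s K (t + j * 6) = (nth 0 [:: 1; 2; 0; 4; 5; 3] t + j * 6)%N.
Proof. by move=> j_lt; case: t => [|[|[|[|[|[|//]]]]]] _ /=; rewrite /neck_s; case_ifs; lia.
Qed.

Section NonzeroColoring.
Variable c : {ffun 'I_M -> 'I_3}.
Hypothesis c_nz : forall x, halfedge_weight s i c x != 0.

Lemma necklace_edge_color k : (k < M)%N -> c (inord (neck_i K k)) = c (inord k).
Proof.
by move=> k_lt; have [] := halfedge_weight_neq0 (c_nz (inord k)); rewrite necklace_i_inord.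
Qed.

Lemma necklace_hair_color k : (6 * K <= k < M)%N -> c (inord k) = 0.
Proof.
move=> /andP[k_ge k_lt]; have [_ ->] // := halfedge_weight_neq0 (c_nz (inord k)).
by apply/eqP; rewrite necklace_hair inordK.
Qed.

Lemma necklace_halfedge_weight k : (k < 6 * K)%N -> halfedge_weight s i c (inord k) =
  eps (c (inord k)) (c (inord (neck_s K k))) (c (inord (neck_s K (neck_s K k)))).
Proof.
move=> k_lt; have k_lt' : (k < M)%N by rewrite /neck_size; lia.
rewrite /halfedge_weight /edge_weight necklace_i_inord // necklace_edge_color // eqxx mul1r.
by rewrite /vertex_weight necklace_hair inordK // leqNgt k_lt /= !necklace_s_inord ?neck_s_lt.
Qed.

(* The two vertices of a bead see the same colours on its double edge; in bead [0]
   both are the hair colour [0]. *)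
Lemma necklace_bead_ge0 j : (j < K)%N ->
  0 <= \prod_(0 <= t < 6) halfedge_weight s i c (inord (t + j * 6)).
Proof.
move=> j_lt; rewrite !big_nat_recl // big_geq //= mulr1.
rewrite !necklace_halfedge_weight ?neck_s_bead //=; try lia.
have c4 : c (inord (4 + j * 6)) = c (inord (1 + j * 6)).
  rewrite -necklace_edge_color /neck_size; last by lia.
  by congr (c (inord _)); rewrite /neck_i; case_ifs; lia.
have c5 : c (inord (5 + j * 6)) = c (inord (2 + j * 6)).
  have [->|j_gt0] := posnP j; last first.
    rewrite -necklace_edge_color /neck_size; last by lia.
    by congr (c (inord _)); rewrite /neck_i; case_ifs; lia.
  have hair k : (k = 2 \/ k = 5)%N -> c (inord k) = 0.
    move=> k25; rewrite -necklace_edge_color ?necklace_hair_color //;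
      by rewrite /neck_size /neck_i; case_ifs; lia.
  by rewrite (hair (5 + 0 * 6)%N) ?(hair (2 + 0 * 6)%N) //; lia.
by rewrite c4 c5; apply: eps_bead_ge0.
Qed.

Lemma coloring_weight_necklace_nz_ge0 : 0 <= coloring_weight s i c.
Proof.
rewrite /coloring_weight (_ : \prod_x _ = \prod_(0 <= k < M) halfedge_weight s i c (inord k)).
  rewrite (big_cat_nat _ (n := (K * 6)%N)) /=; try by rewrite /neck_size; lia.
  apply: mulr_ge0.
    rewrite big_nat_mul big_nat_cond; apply: prodr_ge0 => j /andP[/andP[_ j_lt] _].
    by rewrite -{1}[(j * 6)%N]add0n big_addn mulSn addnK; apply: necklace_bead_ge0.
  rewrite big_nat_cond; apply: prodr_ge0 => k /andP[/andP[k_ge k_lt] _].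
  by apply: halfedge_weight_hair_ge0; apply/eqP; rewrite necklace_hair inordK //; lia.
by rewrite big_mkord; apply: eq_bigr => x _; rewrite inord_val.
Qed.

End NonzeroColoring.

Lemma coloring_weight_necklace_ge0 c : 0 <= coloring_weight s i c.
Proof.
have [/existsP[x /eqP w0]|/existsPn c_nz] := boolP [exists x, halfedge_weight s i c x == 0].
  by rewrite /coloring_weight (bigD1 x) //= w0 mul0r.
exact: coloring_weight_necklace_nz_ge0.
Qed.

Definition necklace_coloring : {ffun 'I_M -> 'I_3} :=
  [ffun x : 'I_M => inord (neck_color K x)].

Lemma coloring_weight_necklace_coloring : coloring_weight s i necklace_coloring = 1.
Proof.
apply: big1 => x _; rewrite /halfedge_weight.
have x_lt := ltn_ord x; rewrite /neck_size in x_lt.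
have -> : edge_weight i necklace_coloring x = 1.
  rewrite /edge_weight !ffunE necklace_iE.
  rewrite (_ : neck_color K (neck_i K x) = neck_color K x) ?eqxx //.
  by rewrite /neck_color /neck_i; case_ifs; lia.
rewrite mul1r /vertex_weight necklace_hair !ffunE !necklace_sE.
case: (leqP (6 * K) x) => x_hair.
  by rewrite /neck_color ltnNge x_hair /= -val_eqE /= inordK.
have -> : neck_color K (neck_s K x) = ((neck_color K x + 1) %% 3)%N.
  by rewrite /neck_color /neck_s; case_ifs; lia.
have -> : neck_color K (neck_s K (neck_s K x)) = ((neck_color K x + 2) %% 3)%N.
  by rewrite /neck_color /neck_s; case_ifs; lia.
by rewrite eps_cyc // /neck_color; case_ifs; lia.
Qed.

Lemma so3_weight_necklace_gt0 : 0 < so3_weight (necklace N).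
Proof.
rewrite /= (bigD1 necklace_coloring) //= coloring_weight_necklace_coloring.
by rewrite ltr_wpDr ?sumr_ge0 // => c _; apply: coloring_weight_necklace_ge0.
Qed.

End NecklaceWeight.

Theorem mainTheorem3 (n : nat) : (1 <= n)%N -> A2h_nonzero n.+1.
Proof.
move=> n_gt0; exists [:: (1, necklace n.-1)]; split.
  move=> p; rewrite inE => /eqP -> /=; split.
  - exact: necklace_valid.
  - exact: necklace_two_hairs_on_edge.
  - by rewrite necklace_degree prednK.
move=> /so3_weight_comb_rel_span; rewrite /so3_weight_comb big_seq1 mul1r => /eqP.
rewrite intr_eq0 => /eqP w0.
by have := so3_weight_necklace_gt0 n.-1; rewrite w0 ltxx.
Qed.
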